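(* Let $p\neq 2$ be a prime and $G=Z_{p^{\lambda_1}}\times\cdots\times Z_{p^{\lambda_n}}$ with $0<\lambda_1<\cdots<\lambda_n$. The join-irreducible elements of $\mathrm{Char}(G)$ are precisely the subgroups $J(i,j)$ for $i\in\{1,\dots,n\}$, $j\in\{1,\dots,\lambda_i\}$.
   Context: $\mathrm{Char}(G)$ is the lattice of characteristic subgroups of $G$; an element of a finite lattice is join-irreducible if it is not the bottom element and is not the join of two elements each strictly below it. Tuples are ordered componentwise; for $\mathbf 0\le\mathbf a\le(\lambda_1,\dots,\lambda_n)$, $T(\mathbf a)$ is the set of $(g_1,\dots,g_n)\in G$ with $|g_i|=p^{a_i}$, and $R(\mathbf a)=\bigcup_{\mathbf b\le\mathbf a}T(\mathbf b)$. For $i\in\{1,\dots,n\}$ and $j\in\{1,\dots,\lambda_i\}$, $J(i,j)=R(\mathbf a)$ where $a_k=j$ for $k\ge i$ and $a_k=\max\{0,\,j-(\lambda_i-\lambda_k)\}$ for $k<i$. *)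

From HB Require Import structures.
From mathcomp Require Import all_boot all_order all_fingroup.
Set Implicit Arguments. Unset Strict Implicit. Unset Printing Implicit Defensive.

(* G = Z_{p^l_1} x ... x Z_{p^l_n} is presented as an internal direct product
   G = <[x 0]> x ... x <[x (n-1)]> with #[x i] = p ^ l i; an element
   g = \prod_i y i (y i \in <[x i]>) is the tuple (y 0, ..., y (n-1)). *)

Section Defs.
Variable gT : finGroupType.
Local Open Scope group_scope.

Definition Tset (n p : nat) (x : 'I_n -> gT) (b : 'I_n -> nat) : {set gT} :=
  [set g | [exists y : {ffun 'I_n -> gT},
     [forall i, (y i \in <[x i]>) && (#[y i] == p ^ b i)%N]
     && (g == \prod_(i < n) y i)]].

Definition Rset (n p : nat) (x : 'I_n -> gT) (a : 'I_n -> nat) : {set gT} :=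
  \bigcup_(b : {ffun 'I_n -> 'I_((\max_(k < n) a k).+1)} | [forall k, (b k <= a k)%N])
     Tset p x (fun k => nat_of_ord (b k)).

(* J(i,j) = R(a), a_k = j for k >= i, a_k = max(0, j - (l_i - l_k)) for k < i
   (nat truncated subtraction realizes the max with 0). *)
Definition Jset (n p : nat) (x : 'I_n -> gT) (l : 'I_n -> nat) (i : 'I_n) (j : nat)
  : {set gT} :=
  Rset p x (fun k => if (i <= k)%N then j else (j - (l i - l k))%N).

(* Join-irreducible elements of the lattice Char(G) of characteristic subgroups
   (bottom = trivial subgroup, join of K and L = K <*> L, which is characteristic). *)
Definition char_join_irreducible (G H : {group gT}) : Prop :=
  H \char G /\ H :!=: 1 /\
  ~ (exists K L : {group gT},
       [/\ K \char G, L \char G, K \proper H, L \proper H & (H :=: K <*> L)]).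
End Defs.

(* A characteristic subgroup K of the abelian group G is stable under every map
   g |-> g * f (g_i) that is an automorphism of G, where g_i is the i-th coordinate
   of g and f is a homomorphism.  Taking f = id (an automorphism since p is odd)
   shows that K is closed under taking coordinates; taking f : <[x i]> -> <[x k]>
   with k != i shows that x_i^m in K forces w^m in K for every w in <[x k]> of order
   dividing #[x i].  Hence J(i,j) = Mho^(l_i - j)(G) :&: Ohm_j(G) is characteristic
   and is contained in every characteristic subgroup containing an element of
   <[x i]> of order at least p^j.  A characteristic subgroup is thus the join of
   the J(k,s) below it, so a join-irreducible one is some J(k,s).  Conversely, if
   J(i,j) = K L and x_i^(p^(l_i - j)) = a b with a in K, b in L, then the i-th
   coordinate of a or of b has order at least p^j, so J(i,j) lies in K or in L. *)

From HB Require Import structures.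
From mathcomp Require Import all_boot all_order all_fingroup all_solvable.
From mathcomp Require Import zify.
Set Implicit Arguments. Unset Strict Implicit. Unset Printing Implicit Defensive.

Local Open Scope group_scope.

Lemma abelian_bigdprod (gT : finGroupType) (I : Type) (r : seq I) (P : pred I)
    (A : I -> {group gT}) (G : {group gT}) :
  (forall i, P i -> abelian (A i)) -> \big[dprod/1]_(i <- r | P i) A i = G -> abelian G.
Proof.
move=> cAA; elim/big_rec: _ G => [G <-|i B Pi IH G /dprodP[[K L defK defL] <- cKL _]].
  exact: abelian1.
by rewrite defL in cKL *; rewrite abelianM cAA // IH.
Qed.

Lemma char_shear (gT : finGroupType) (G K : {group gT}) (f : gT -> gT) :
    abelian G -> {in G, forall g, f g \in G} -> {in G &, {morph f : a b / a * b}} ->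
    {in G, forall g, g * f g = 1 -> g = 1} ->
  K \char G -> {in K, forall g, f g \in K}.
Proof.
move=> cGG Gf fM f_inj /charP[sKG chK] g Kg.
have shearM : {in G &, {morph (fun g => g * f g) : a b / a * b}}.
  move=> a b Ga Gb /=; rewrite fM // -!mulgA; congr (_ * _).
  by rewrite !mulgA; congr (_ * _); apply: (centsP cGG); rewrite ?Gf.
pose sh := Morphism shearM.
have inj_sh : 'injm sh.
  apply/subsetP=> a /morphpreP[Ga /set1P sha1]; apply/set1P; exact: f_inj.
have im_sh : sh @* G = G.
  apply/eqP; rewrite eqEcard card_injm // leqnn andbT.
  by apply/subsetP=> _ /morphimP[a Ga _ ->]; rewrite /= groupM ?Gf.
have : sh g \in K by rewrite -(chK sh inj_sh im_sh) mem_morphim // (subsetP sKG).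
by rewrite /= -{2}(mulKg g (f g)) => /(groupM (groupVr Kg)).
Qed.

Section Coordinates.
Variables (gT : finGroupType) (n : nat) (A : 'I_n -> {group gT}) (G : {group gT}).
Hypotheses (defG : \big[dprod/1]_(i < n) A i = G) (cAA : forall i, abelian (A i)).

(* Outside G the coordinates are junk (constantly 1). *)
Definition coord (g : gT) : {ffun 'I_n -> gT} :=
  odflt [ffun=> 1] [pick c : {ffun 'I_n -> gT} |
     [forall i, c i \in A i] && (g == \prod_(i < n) c i)].

Lemma abelian_coord_group : abelian G.
Proof. exact: abelian_bigdprod defG. Qed.

Lemma factor_sub i : A i \subset G.
Proof.
move: defG; rewrite (bigD1 i) //= => /dprodP[[K L defK defL] <- _ _].
by rewrite defL mulG_subl.
Qed.

Lemma mem_prod_factors (c : 'I_n -> gT) :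
  (forall i, c i \in A i) -> \prod_(i < n) c i \in G.
Proof. by move=> Ac; rewrite -(bigdprodW defG); apply: mem_prodg. Qed.

Lemma coordP g : g \in G ->
  (forall i, coord g i \in A i) /\ \prod_(i < n) coord g i = g.
Proof.
move=> Gg; rewrite /coord; case: pickP => [c /andP[/forallP Ac /eqP ->] //| none].
have [c [Ac def _]] := mem_bigdprod defG Gg.
suff: false by [].
rewrite -(none [ffun i => c i]); apply/andP; split.
  by apply/forallP=> i; rewrite ffunE; apply: Ac.
by apply/eqP; rewrite def; apply: eq_bigr => i _; rewrite ffunE.
Qed.

Lemma coord_mem g i : g \in G -> coord g i \in A i.
Proof. by case/coordP. Qed.

Lemma coord_group g i : g \in G -> coord g i \in G.
Proof. by move=> Gg; apply: subsetP (factor_sub i) _ (coord_mem i Gg). Qed.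

Lemma prod_coord g : g \in G -> \prod_(i < n) coord g i = g.
Proof. by case/coordP. Qed.

Lemma eq_coord g h : g \in G -> h \in G -> (forall i, coord g i = coord h i) -> g = h.
Proof.
move=> Gg Gh eq_gh; rewrite -(prod_coord Gg) -(prod_coord Gh).
by apply: eq_bigr => i _.
Qed.

Lemma coord_prod (c : 'I_n -> gT) i :
  (forall i, c i \in A i) -> coord (\prod_(i < n) c i) i = c i.
Proof.
move=> Ac; have Gc := mem_prod_factors Ac.
have [c' [_ _ uniq_c]] := mem_bigdprod defG Gc.
have [Ac' /esym def_c] := coordP Gc.
by rewrite (uniq_c c (fun j _ => Ac j)) // (uniq_c _ (fun j _ => Ac' j) def_c).
Qed.

Lemma coord_factor k y i : y \in A k -> coord y i = if i == k then y else 1.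
Proof.
move=> Aky.
have Ay j : (if j == k then y else 1) \in A j by case: eqP => [->|]; rewrite ?group1.
by rewrite -(coord_prod i Ay) -big_mkcond big_pred1_eq.
Qed.

Lemma coord1 i : coord 1 i = 1.
Proof. by rewrite (coord_factor i (group1 (A i))) if_same. Qed.

Lemma prodgM (f g : 'I_n -> gT) : (forall i, f i \in G) -> (forall i, g i \in G) ->
  \prod_(i < n) (f i * g i) = (\prod_(i < n) f i) * \prod_(i < n) g i.
Proof.
move=> Gf Gg; have cGG := abelian_coord_group.
suff [] : (\prod_(i < n) (f i * g i) = (\prod_(i < n) f i) * \prod_(i < n) g i)
   /\ (\prod_(i < n) f i \in G /\ \prod_(i < n) g i \in G) by [].
elim/big_rec3: _ => [|i a b c _ [-> [Gb Gc]]]; first by rewrite mulg1 !group1.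
split; last by rewrite !groupM.
rewrite -!mulgA; congr (_ * _); rewrite !mulgA; congr (_ * _).
exact: (centsP cGG).
Qed.

Lemma coordM g h i : g \in G -> h \in G -> coord (g * h) i = coord g i * coord h i.
Proof.
move=> Gg Gh; pose c j := coord g j * coord h j.
have Ac j : c j \in A j by rewrite groupM ?coord_mem.
rewrite -[RHS]/(c i) -(coord_prod i Ac) prodgM ?prod_coord // => j;
  exact: coord_group.
Qed.

Lemma coordX g m i : g \in G -> coord (g ^+ m) i = coord g i ^+ m.
Proof.
move=> Gg; elim: m => [|m IHm]; first by rewrite !expg0 coord1.
by rewrite !expgS coordM ?groupX // IHm.
Qed.

Lemma char_coord (K : {group gT}) i :
  odd #|G| -> K \char G -> {in K, forall g, coord g i \in K}.
Proof.
move=> oddG; apply: char_shear; first exact: abelian_coord_group.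
- by move=> g; apply: coord_group.
- by move=> g h; apply: coordM.
move=> g Gg /[dup] gi1 /(congr1 (fun u => coord u i)).
rewrite coordM ?coord_group // (coord_factor i (coord_mem i Gg)) eqxx coord1 => ci2.
suff ci1 : coord g i = 1 by rewrite ci1 mulg1 in gi1.
apply/eqP; rewrite -order_eq1.
have odd_ci : odd #[coord g i] by apply: dvdn_odd oddG; rewrite order_dvdG ?coord_group.
have : #[coord g i] %| 2 by rewrite order_dvdn expg2 ci2.
move/(dvdn_leq (isT : 0 < 2)); case: #[_] odd_ci (order_gt0 (coord g i)) => [|[|[|m]]] //.
Qed.

Lemma char_coord_morph (K : {group gT}) (i k : 'I_n) (phi : {morphism A i >-> gT}) :
    k != i -> phi @* A i \subset A k ->
  K \char G -> {in K, forall g, phi (coord g i) \in K}.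
Proof.
move=> nki phiAk; have phiA g : g \in G -> phi (coord g i) \in A k.
  by move=> Gg; rewrite (subsetP phiAk) ?mem_morphim ?coord_mem.
apply: char_shear; first exact: abelian_coord_group.
- by move=> g /phiA; apply: (subsetP (factor_sub k)).
- by move=> g h Gg Gh /=; rewrite coordM // morphM ?coord_mem.
move=> g Gg /[dup] g1 /(congr1 (fun u => coord u i)).
have Gphi : phi (coord g i) \in G by apply: (subsetP (factor_sub k)); apply: phiA.
rewrite coordM // (coord_factor i (phiA g Gg)) eq_sym (negbTE nki) mulg1 coord1 => ci1.
by rewrite ci1 morph1 mulg1 in g1.
Qed.

End Coordinates.

Section PowerOfPrimeOrder.
Variables (gT : finGroupType) (p : nat).
Hypothesis pr_p : prime p.

Lemma p_elt_order (y : gT) : p.-elt y -> #[y] = (p ^ logn p #[y])%N.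
Proof. by move=> py; rewrite -p_part part_pnat_id. Qed.

Lemma p_elt_expg_eq1 (y : gT) u : p.-elt y -> (y ^+ (p ^ u) == 1) = (logn p #[y] <= u).
Proof.
by move=> py; rewrite -order_dvdn [X in X %| _](p_elt_order py) dvdn_Pexp2l ?prime_gt1.
Qed.

Lemma cycle_mem_p_elt (x y z : gT) : p.-elt x -> y \in <[x]> -> z \in <[x]> ->
  (z \in <[y]>) = (logn p #[z] <= logn p #[y]).
Proof.
move=> px xy xz; have pz := mem_p_elt px xz; have py := mem_p_elt px xy.
rewrite -cycle_subG -(cardSg_cyclic (cycle_cyclic x)) ?cycle_subG // -!orderE.
rewrite [X in X %| _](p_elt_order pz) [X in _ %| X](p_elt_order py).
by rewrite dvdn_Pexp2l ?prime_gt1.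
Qed.

Lemma logn_order_expg (x : gT) l m : #[x] = (p ^ l)%N -> logn p #[x ^+ (p ^ m)] = l - m.
Proof. by move/(orderXexp m) ->; rewrite pfactorK. Qed.

Lemma logn_order_mul (a b : gT) : commute a b -> p.-elt a -> p.-elt b ->
  logn p #[a * b] <= maxn (logn p #[a]) (logn p #[b]).
Proof.
move=> cab pa pb; set u := maxn _ _.
have /eqP au : a ^+ (p ^ u) == 1 by rewrite p_elt_expg_eq1 ?leq_maxl.
have /eqP bu : b ^+ (p ^ u) == 1 by rewrite p_elt_expg_eq1 ?leq_maxr.
by rewrite -(p_elt_expg_eq1 _ (p_eltM cab pa pb)) expgMn // au bu mulg1.
Qed.

Lemma mem_cycleX_pfactor (x c : gT) l m : #[x] = (p ^ l)%N -> c \in <[x]> ->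
  (c \in <[x ^+ (p ^ m)]>) = (logn p #[c] <= l - m).
Proof.
move=> ox xc; have px : p.-elt x by rewrite /p_elt ox pnatX pnat_id.
by rewrite (cycle_mem_p_elt px) ?mem_cycle // (logn_order_expg m ox).
Qed.

End PowerOfPrimeOrder.

Section CharLattice.
Variables (gT : finGroupType) (G : {group gT}) (I : eqType) (F : I -> {group gT}).

Lemma char_gen_bigcup (r : seq I) :
  {in r, forall i, F i \char G} -> <<\bigcup_(i <- r) F i>> \char G.
Proof.
elim: r => [|i r IHr] chF; first by rewrite big_nil gen0 char1.
rewrite big_cons -joingE -joing_idr charY ?chF ?mem_head // IHr // => j rj.
by rewrite chF // inE rj orbT.
Qed.

Lemma char_join_irreducible_bigcup (H : {group gT}) (r : seq I) :
    char_join_irreducible G H -> {in r, forall i, F i \char G /\ F i \subset H} ->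
  H \subset <<\bigcup_(i <- r) F i>> -> exists2 i, i \in r & H :=: F i.
Proof.
case=> chH [ntH no_split]; elim: r => [|i r IHr] chF sHr.
  by case/negP: ntH; apply/eqP/trivgP; rewrite big_nil gen0 in sHr.
have [chFi sFiH] := chF i (mem_head i r).
have {}chF : {in r, forall j, F j \char G /\ F j \subset H}.
  by move=> j rj; apply: chF; rewrite inE rj orbT.
pose R := <<\bigcup_(j <- r) F j>>%G.
have sRH : R \subset H.
  rewrite gen_subG big_seq; elim/big_ind: _ => [|U V sUH sVH|j /chF[] //].
    exact: sub0set.
  by rewrite subUset sUH.
have defH : H :=: F i <*> R.
  apply/eqP; rewrite eqEsubset; apply/andP; split; last exact/joing_subP.
  by rewrite joing_idr; rewrite big_cons in sHr.
have [eqFiH | neFiH] := eqVneq (F i :> {set gT}) H; first by exists i; rewrite ?mem_head.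
have [eqRH | neRH] := eqVneq (R :> {set gT}) H.
  have sHR : H \subset R by rewrite -eqRH.
  by have [j rj eqHFj] := IHr chF sHR; exists j; rewrite // inE rj orbT.
case: no_split; exists (F i), R; split=> //; last by rewrite properEneq neRH.
- by apply: char_gen_bigcup => j /chF[].
by rewrite properEneq neFiH.
Qed.

End CharLattice.

Section CyclicDecomposition.
Variables (gT : finGroupType) (G : {group gT}) (p n : nat).
Variables (l : 'I_n -> nat) (x : 'I_n -> gT).
Hypotheses (pr_p : prime p) (odd_p : odd p)
  (lmono : forall i j : 'I_n, i < j -> l i < l j)
  (ox : forall i, #[x i] = (p ^ l i)%N)
  (defG : \big[dprod/1]_(i < n) <[x i]> = G).

Local Notation X := (fun i => <[x i]>%G).
Let defX : \big[dprod/1]_(i < n) X i = G := defG.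
Let cXX i : abelian (X i) := cycle_abelian (x i).
Local Notation coord := (coord X).

Let cGG : abelian G := abelian_coord_group defX cXX.

Let pG : p.-group G.
Proof.
rewrite /pgroup -(bigdprod_card defG).
by elim/big_ind: _ => // [a b pa pb | i _]; rewrite ?pnatM ?pa // -orderE ox pnatX pnat_id.
Qed.

Let oddG : odd #|G|.
Proof. by rewrite (card_pgroup pG) oddX odd_p orbT. Qed.

Let px k : p.-elt (x k).
Proof. by rewrite /p_elt ox pnatX pnat_id. Qed.

Lemma p_elt_coord g k : g \in G -> p.-elt (coord g k).
Proof. by move=> Gg; apply: mem_p_elt (px k) (coord_mem defX k Gg). Qed.

Definition Jexp (i : 'I_n) j (k : 'I_n) := if i <= k then j else j - (l i - l k).

Lemma leq_Jexp i j k s : j <= l i ->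
  (s <= Jexp i j k) = (s <= j) && (s <= l k - (l i - j)).
Proof.
move=> jl; rewrite /Jexp; case: (leqP i k) => [ik | /lmono lki]; last lia.
have : l i <= l k by move: ik; rewrite leq_eqVlt => /orP[/eqP/ord_inj-> // | /lmono/ltnW].
lia.
Qed.

Lemma RsetP a g :
  reflect (g \in G /\ forall k, logn p #[coord g k] <= a k) (g \in Rset p x a).
Proof.
apply: (iffP bigcupP) => [[b /forallP ba] | [Gg ga]].
  rewrite inE => /existsP[y /andP[/forallP xy /eqP ->]].
  have {}xy k : y k \in X k /\ #[y k] = (p ^ b k)%N by case/andP: (xy k) => -> /eqP.
  split=> [|k]; first by apply: (mem_prod_factors defX) => k; case: (xy k).
  rewrite (coord_prod defX); last by move=> i; case: (xy i).
  by case: (xy k) => _ ->; rewrite pfactorK.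
have lt_a k : logn p #[coord g k] < (\max_(i < n) a i).+1.
  by rewrite ltnS (leq_trans (ga k)) // (@leq_bigmax _ a k).
exists [ffun k => inord (logn p #[coord g k])].
  by apply/forallP=> k; rewrite ffunE inordK.
rewrite inE; apply/existsP; exists (coord g); rewrite (prod_coord defX) // eqxx andbT.
apply/forallP=> k; rewrite (coord_mem defX) //= ffunE inordK //.
by rewrite -p_elt_order ?p_elt_coord.
Qed.

Lemma OhmP j g :
  reflect (g \in G /\ forall k, logn p #[coord g k] <= j) (g \in 'Ohm_j(G)).
Proof.
rewrite (OhmEabelian pG (abelianS (Ohm_sub j G) cGG)).
apply: (iffP LdivP) => [[Gg gp1] | [Gg gj]]; split=> //.
  move=> k; rewrite -(p_elt_expg_eq1 pr_p _ (p_elt_coord k Gg)).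
  by rewrite -(coordX defX cXX) // gp1 (coord1 defX).
apply: (eq_coord defX); rewrite ?groupX ?group1 // => k.
rewrite (coordX defX cXX) // (coord1 defX); apply/eqP.
by rewrite (p_elt_expg_eq1 pr_p) ?p_elt_coord.
Qed.

Lemma MhoP m g :
  reflect (g \in G /\ forall k, logn p #[coord g k] <= l k - m) (g \in 'Mho^m(G)).
Proof.
have memXm k c : c \in X k -> (c \in <[x k ^+ (p ^ m)]>) = (logn p #[c] <= l k - m).
  exact: (mem_cycleX_pfactor pr_p).
apply: (iffP idP) => [Mg | [Gg gm]].
  have Gg := subsetP (Mho_sub m G) g Mg; split=> // k.
  move: Mg; rewrite (MhoEabelian _ pG cGG) => /imsetP[h Gh ->].
  have /cycleP[t ht] := coord_mem defX k Gh.
  rewrite (coordX defX cXX) // -memXm ht; last exact: groupX (mem_cycle _ _).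
  by rewrite -expgM mulnC expgM mem_cycle.
rewrite -(prod_coord defX Gg); apply: group_prod => k _.
have /cycleP[t ->] : coord g k \in <[x k ^+ (p ^ m)]> by rewrite memXm ?(coord_mem defX).
rewrite -expgM mulnC expgM Mho_p_elt ?groupX //.
  by apply: (subsetP (factor_sub defX k)); apply: cycle_id.
exact: p_eltX.
Qed.

Lemma Jset_Mho_Ohm i j : j <= l i -> Jset p x l i j = 'Mho^(l i - j)(G) :&: 'Ohm_j(G).
Proof.
move=> jl; apply/setP=> g; rewrite inE.
apply/(RsetP (Jexp i j))/andP => [[Gg ga] | [/MhoP[Gg gm] /OhmP[_ gj]]].
  split; [apply/MhoP | apply/OhmP]; split=> // k.
    by have := ga k; rewrite leq_Jexp // => /andP[].
  by have := ga k; rewrite leq_Jexp // => /andP[].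
by split=> // k; rewrite leq_Jexp ?gm ?gj.
Qed.

Lemma Jset_char i j : j <= l i -> Jset p x l i j \char G.
Proof. by move=> jl; rewrite Jset_Mho_Ohm // charI ?Mho_char ?Ohm_char. Qed.

Definition Jgen i j := x i ^+ (p ^ (l i - j)).

Lemma logn_Jgen i j : j <= l i -> logn p #[Jgen i j] = j.
Proof. by move=> jl; rewrite (logn_order_expg pr_p _ (ox i)) subKn. Qed.

Lemma mem_Jset_cycle k s c : c \in <[x k]> -> logn p #[c] <= s -> c \in Jset p x l k s.
Proof.
move=> xc cs; apply/RsetP; split=> [|m]; first exact: subsetP (factor_sub defX k) _ xc.
rewrite (coord_factor defX m xc); case: eqP => [-> | _]; last by rewrite order1 logn1.
by rewrite /Jexp leqnn.
Qed.

Lemma Jgen_mem i j : j <= l i -> Jgen i j \in Jset p x l i j.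
Proof. by move=> jl; rewrite mem_Jset_cycle ?mem_cycle ?logn_Jgen. Qed.

Lemma char_push (K : {group gT}) i k w m : w \in <[x k]> -> #[w] %| #[x i] ->
  K \char G -> x i ^+ m \in K -> w ^+ m \in K.
Proof.
move=> xw dvd_w chK Kxm; have [eq_ki | nki] := eqVneq k i.
  by rewrite eq_ki in xw; case/cycleP: xw => t ->; rewrite -expgM mulnC expgM groupX.
have phiX : eltm dvd_w @* <[x i]> \subset <[x k]> by rewrite im_eltm cycle_subG.
have := char_coord_morph defX cXX nki phiX chK Kxm.
by rewrite (coord_factor defX i (mem_cycle (x i) m)) eqxx /= (eltmE dvd_w).
Qed.

Lemma Jset_sub_char (K : {group gT}) i j :
  K \char G -> j <= l i -> Jgen i j \in K -> Jset p x l i j \subset K.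
Proof.
move=> chK jl Kgen; apply/subsetP=> g /RsetP[Gg ga].
rewrite -(prod_coord defX Gg); apply: group_prod => k _.
pose w := x k ^+ (p ^ (l k - l i)).
have dvd_w : #[w] %| #[x i] by rewrite (orderXexp _ (ox k)) ox; apply: dvdn_exp2l; lia.
have Kwj : w ^+ (p ^ (l i - j)) \in K by apply: char_push (mem_cycle _ _) dvd_w chK Kgen.
suff : coord g k \in <[w ^+ (p ^ (l i - j))]> by apply: subsetP; rewrite cycle_subG.
rewrite /w -expgM -expnD (mem_cycleX_pfactor pr_p _ (ox k)) ?(coord_mem defX) //.
by move: (ga k); rewrite leq_Jexp //; lia.
Qed.

Lemma Jset_sub_char_elt (K : {group gT}) i j c : K \char G -> j <= l i ->
  c \in <[x i]> -> c \in K -> j <= logn p #[c] -> Jset p x l i j \subset K.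
Proof.
move=> chK jl xc Kc jc; apply: Jset_sub_char => //.
suff : Jgen i j \in <[c]> by apply: subsetP; rewrite cycle_subG.
by rewrite (cycle_mem_p_elt pr_p (px i)) ?mem_cycle ?logn_Jgen.
Qed.

Lemma Jset_char_join_irreducible (H : {group gT}) i j :
  0 < j <= l i -> H :=: Jset p x l i j -> char_join_irreducible G H.
Proof.
case/andP=> j_gt0 jl defH; split; first by rewrite defH Jset_char.
split.
  apply/trivgPn; exists (Jgen i j); first by rewrite defH Jgen_mem.
  by apply: contraTneq j_gt0 => gen1; rewrite -(logn_Jgen jl) gen1 order1 logn1.
case=> K [L [chK chL /andP[_ nsHK] /andP[_ nsHL] defKL]].
have [sKG sLG] := (char_sub chK, char_sub chL).
have : Jgen i j \in K * L.
  rewrite -comm_joingE -?defKL ?defH ?Jgen_mem //.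
  exact/centC/(sub_abelian_cent2 cGG).
case/mulsgP=> a b Ka Lb ab_gen.
have [Ga Gb] := (subsetP sKG a Ka, subsetP sLG b Lb).
have gen_ab : Jgen i j = coord a i * coord b i.
  by rewrite -(coordM defX cXX) // -ab_gen (coord_factor defX i (mem_cycle _ _)) eqxx.
have : j <= maxn (logn p #[coord a i]) (logn p #[coord b i]).
  rewrite -{1}(logn_Jgen jl) gen_ab (logn_order_mul pr_p) ?p_elt_coord //.
  by apply: (centsP cGG); rewrite (coord_group defX).
have sHM (M : {group gT}) c :
    M \char G -> c \in M -> j <= logn p #[coord c i] -> H \subset M.
  move=> chM Mc jc; have Gc := subsetP (char_sub chM) c Mc; rewrite defH.
  apply: (Jset_sub_char_elt chM jl (coord_mem defX i Gc)) => //.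
  exact: (char_coord defX cXX i oddG chM).
by rewrite leq_max => /orP[/(sHM K a chK Ka) | /(sHM L b chL Lb)]; apply/negP.
Qed.

Lemma char_join_irreducible_Jset (H : {group gT}) : char_join_irreducible G H ->
  exists i j, 0 < j <= l i /\ H :=: Jset p x l i j.
Proof.
move=> irrH; have [chH _] := irrH.
pose N := (\max_(k < n) l k).+1.
pose P := [pred ks : 'I_n * 'I_N |
  (0 < ks.2 <= l ks.1) && (Jset p x l ks.1 ks.2 \subset H)].
pose F (ks : 'I_n * 'I_N) := ('Mho^(l ks.1 - ks.2)(G) :&: 'Ohm_(ks.2)(G))%G.
have FJ ks : P ks -> F ks :=: Jset p x l ks.1 ks.2.
  by case/andP=> /andP[_ sl] _; rewrite Jset_Mho_Ohm.
suff [ks Pks defH] : exists2 ks, ks \in enum P & H :=: F ks.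
  rewrite mem_enum in Pks; exists ks.1, ks.2; rewrite defH FJ //.
  by case/andP: Pks.
apply: char_join_irreducible_bigcup irrH _ _ => [ks | ].
  by rewrite mem_enum => Pks; rewrite FJ //; case/andP: Pks => /andP[_ /Jset_char].
apply/subsetP=> g Hg; have Gg := subsetP (char_sub chH) g Hg.
rewrite -(prod_coord defX Gg); apply: group_prod => k _.
have [-> | ntc] := eqVneq (coord g k) 1; first exact: group1.
have xc := coord_mem defX k Gg.
have s_gt0 : 0 < logn p #[coord g k].
  rewrite lt0n; apply: contra ntc => /eqP c0.
  by rewrite -order_eq1 (p_elt_order (p_elt_coord k Gg)) c0.
have s_le : logn p #[coord g k] <= l k.
  by rewrite -(pfactorK (l k) pr_p) -ox dvdn_leq_log ?order_gt0 // order_dvdG.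
have s_lt : logn p #[coord g k] < N by rewrite ltnS (leq_trans s_le) // (@leq_bigmax _ l k).
have sJH : Jset p x l k (logn p #[coord g k]) \subset H.
  exact: (Jset_sub_char_elt chH s_le xc (char_coord defX cXX k oddG chH Hg)).
apply: mem_gen; rewrite bigcup_seq; apply/bigcupP; exists (k, Ordinal s_lt).
  by rewrite mem_enum inE /= s_gt0 s_le.
by rewrite FJ ?mem_Jset_cycle //= s_gt0 s_le.
Qed.

End CyclicDecomposition.

Local Close Scope group_scope.

Theorem mainTheorem16 (gT : finGroupType) (G : {group gT}) (p n : nat)
  (l : 'I_n -> nat) (x : 'I_n -> gT) :
  prime p -> p != 2 ->
  (forall i : 'I_n, 0 < l i) ->
  (forall i j : 'I_n, i < j -> l i < l j) ->
  (forall i : 'I_n, #[x i]%g = p ^ l i) ->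
  (\big[dprod/1]_(i < n) <[x i]>)%g = G ->
  forall H : {group gT},
    char_join_irreducible G H <->
    exists (i : 'I_n) (j : nat), (1 <= j <= l i) /\ (H :=: Jset p x l i j)%g.
Proof.
(* The exponents need not be positive. *)
move=> pr_p p_neq2 _ lmono ox defG H.
have odd_p : odd p by case: (even_prime pr_p) p_neq2 => ->.
split; first exact: (char_join_irreducible_Jset pr_p odd_p lmono ox defG).
by case=> i [j [jl defH]]; apply: (Jset_char_join_irreducible pr_p odd_p lmono ox defG jl).
Qed.
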